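(* Let $u,w\in(-1,1)$, let $B(z)=\left(\frac{z-w}{1-wz}\right)\left(\frac{z-u}{1-uz}\right)$, let $c$ be the unique critical point of $B$ in the open unit disk $\mathbb{D}$, and let \[ \lambda=\exp\!\left[i\left(\pi+2\arg(1-\overline{c}w)+2\arg(1-\overline{c}u)+2\arg(1-c\overline{B(c)})\right)\right]\left(\frac{B(c)-c}{1-\overline{c}B(c)}\right). \] Then $\lambda$ is real.
   Context: The quantities $\exp(2i\arg(\cdot))$ do not depend on the choice of branch of $\arg$. *)

From Stdlib Require Import Reals.
From Coquelicot Require Import Coquelicot.
Open Scope R_scope.
Open Scope C_scope.

Definition cis (t : R) : C := (cos t, sin t).

(* t is an argument (some branch of arg) of z : z = |z| exp(i t). *)
Definition is_arg (z : C) (t : R) : Prop := z = RtoC (Cmod z) * cis t.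

Definition blaschke2 (u w : R) (z : C) : C :=
  ((z - RtoC w) / (1 - RtoC w * z)) * ((z - RtoC u) / (1 - RtoC u * z)).

Definition is_critical_point (f : C -> C) (c : C) : Prop :=
  @is_derive C_AbsRing C_NormedModule f c (RtoC 0).

(** Since the coefficients of [B] are real, [z ↦ conj (B (conj z))] is [B]
    itself, so the conjugate of a critical point is again a critical point in
    the disk; uniqueness forces [c] to be real, hence [B(c)] is real too.  Each
    [1 - ...] whose argument occurs in [λ] is then a real number of the form
    [1 - z] with [|z| < 1] ([B] maps the disk into itself), hence positive, so all its arguments [t] satisfy
    [sin t = 0].  Thus [λ] is a product of real numbers. *)

From Stdlib Require Import Reals Lra.
From Coquelicot Require Import Coquelicot.
Open Scope R_scope.
Open Scope C_scope.

Lemma Cinv_conj_total (a : C) : Cconj (/ a) = / Cconj a.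
Proof.
  destruct a as [x y]. unfold Cinv, Cconj; simpl.
  replace (x * (x * 1) + - y * (- y * 1))%R with (x * (x * 1) + y * (y * 1))%R by ring.
  apply injective_projections; simpl; unfold Rdiv; ring.
Qed.

Lemma Cdiv_conj_total (a b : C) : Cconj (a / b) = Cconj a / Cconj b.
Proof. unfold Cdiv. rewrite Cmult_conj, Cinv_conj_total. reflexivity. Qed.

Lemma RtoC_conj (r : R) : Cconj (RtoC r) = RtoC r.
Proof. apply injective_projections; simpl; ring. Qed.

Lemma is_derive_conj_conj (f g : C -> C) (x l : C) :
  (forall z, g z = Cconj (f (Cconj z))) ->
  @is_derive C_AbsRing C_NormedModule f x l ->
  @is_derive C_AbsRing C_NormedModule g (Cconj x) (Cconj l).
Proof.
  intros Hg [_ Hf]. split; [apply is_linear_scal_l |].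
  intros x0 Hx0.
  apply (@is_filter_lim_locally_unique C_AbsRing (AbsRing_NormedModule C_AbsRing))
    in Hx0; subst x0.
  intros eps. destruct (Hf x (fun P HP => HP) eps) as [d Hd].
  exists d. intros y Hy.
  assert (Ey : minus (Cconj y) x = Cconj (minus y (Cconj x))).
  { destruct y, x; apply injective_projections; simpl; ring. }
  assert (Hy' : abs (minus (Cconj y) x) < d).
  { change (Cmod (minus (Cconj y) x) < d). rewrite Ey, Cmod_conj. exact Hy. }
  specialize (Hd _ Hy'). simpl in Hd |- *.
  rewrite !Hg, Cconj_conj.
  change (Cmod (minus (minus (Cconj (f (Cconj y))) (Cconj (f x)))
                      (scal (minus y (Cconj x)) (Cconj l)))
          <= eps * Cmod (minus y (Cconj x))).
  replace (minus (minus (Cconj (f (Cconj y))) (Cconj (f x)))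
                 (scal (minus y (Cconj x)) (Cconj l)))
    with (Cconj (minus (minus (f (Cconj y)) (f x)) (scal (minus (Cconj y) x) l))).
  - rewrite Cmod_conj, <- (Cmod_conj (minus y (Cconj x))), <- Ey. exact Hd.
  - destruct (f (Cconj y)), (f x), y, x, l.
    apply injective_projections; simpl; ring.
Qed.

Lemma blaschke2_conj (u w : R) (z : C) :
  blaschke2 u w (Cconj z) = Cconj (blaschke2 u w z).
Proof.
  unfold blaschke2.
  rewrite Cmult_conj, !Cdiv_conj_total, !Cminus_conj, !Cmult_conj, !RtoC_conj.
  rewrite <- (RtoC_conj 1). reflexivity.
Qed.

Lemma is_critical_point_blaschke2_conj (u w : R) (c : C) :
  is_critical_point (blaschke2 u w) c -> is_critical_point (blaschke2 u w) (Cconj c).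
Proof.
  unfold is_critical_point. intros Hc.
  rewrite <- RtoC_conj.
  apply (is_derive_conj_conj (blaschke2 u w)); [| exact Hc].
  intros z. rewrite <- blaschke2_conj, Cconj_conj. reflexivity.
Qed.

Lemma unique_critical_point_blaschke2_conj (u w : R) (c : C) :
  Cmod c < 1 -> is_critical_point (blaschke2 u w) c ->
  (forall c' : C, Cmod c' < 1 -> is_critical_point (blaschke2 u w) c' -> c' = c) ->
  Cconj c = c.
Proof.
  intros Hc Hcrit Huniq. apply Huniq.
  - rewrite Cmod_conj. exact Hc.
  - exact (is_critical_point_blaschke2_conj u w c Hcrit).
Qed.

Lemma Im_Cconj_eq (z : C) : Cconj z = z -> Im z = 0%R.
Proof. destruct z as [x y]. intros E. injection E. simpl. lra. Qed.

Lemma Im_RtoC (r : R) : Im (RtoC r) = 0%R.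
Proof. reflexivity. Qed.

Lemma Im_Cminus_real (a b : C) : Im a = 0%R -> Im b = 0%R -> Im (a - b) = 0%R.
Proof. destruct a, b; simpl; lra. Qed.

Lemma Im_Cmult_real (a b : C) : Im a = 0%R -> Im b = 0%R -> Im (a * b) = 0%R.
Proof. destruct a, b; simpl. intros -> ->. ring. Qed.

Lemma Im_Cdiv_real (a b : C) : Im a = 0%R -> Im b = 0%R -> Im (a / b) = 0%R.
Proof.
  destruct a as [a1 a2], b as [b1 b2]. simpl. intros -> ->.
  unfold Cdiv, Cinv, Cmult; simpl. unfold Rdiv. ring.
Qed.

Lemma Im_blaschke2_real (u w : R) (z : C) :
  Im z = 0%R -> Im (blaschke2 u w z) = 0%R.
Proof.
  intros Hz. unfold blaschke2.
  apply Im_Cmult_real; apply Im_Cdiv_real;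
    repeat first [ exact Hz | apply Im_RtoC | apply Im_Cminus_real | apply Im_Cmult_real ].
Qed.

Lemma Re_one_minus_pos (z : C) : Cmod z < 1 -> 0 < Re (1 - z).
Proof.
  intros Hz. pose proof (re_le_Cmod z) as Hre.
  destruct z as [x y]. simpl in *. apply Rabs_le_between in Hre. lra.
Qed.

Lemma Cmod_RtoC_lt1 (r : R) : -1 < r < 1 -> Cmod (RtoC r) < 1.
Proof. intros Hr. rewrite Cmod_R. apply Rabs_def1; lra. Qed.

Lemma Cmod_mult_lt1 (a b : C) : Cmod a < 1 -> Cmod b < 1 -> Cmod (a * b) < 1.
Proof.
  intros Ha Hb. rewrite Cmod_mult.
  pose proof (Cmod_ge_0 a). pose proof (Cmod_ge_0 b). nra.
Qed.

Lemma Cmod_mobius_lt1 (w : R) (z : C) :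
  -1 < w < 1 -> Cmod z < 1 -> Cmod ((z - RtoC w) / (1 - RtoC w * z)) < 1.
Proof.
  intros Hw Hz.
  pose proof (Cmod_mult_lt1 _ _ (Cmod_RtoC_lt1 w Hw) Hz) as Hwz.
  assert (Hden : 1 - RtoC w * z <> 0).
  { intros E. pose proof (Re_one_minus_pos _ Hwz) as Hre. rewrite E in Hre. simpl in Hre. lra. }
  assert (Hsq : Cmod (z - RtoC w) ^ 2 < Cmod (1 - RtoC w * z) ^ 2).
  { assert (Hz2 : Cmod z ^ 2 < 1) by (pose proof (Cmod_ge_0 z); nra).
    rewrite Cmod2_alt in Hz2. rewrite !Cmod2_alt.
    destruct z as [x y]. simpl in Hz2 |- *. clear Hz Hwz Hden.
    (* [|1 - w z|^2 - |z - w|^2 = (1 - w^2) (1 - |z|^2)] *)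
    assert (0 < (1 - w * w) * (1 - (x ^ 2 + y ^ 2))) by (apply Rmult_lt_0_compat; nra).
    nra. }
  assert (Hpos : 0 < Cmod (1 - RtoC w * z)) by (apply Cmod_gt_0; exact Hden).
  rewrite Cmod_div; [| exact Hden].
  apply (Rdiv_lt_1 _ _ Hpos).
  pose proof (Cmod_ge_0 (z - RtoC w)). nra.
Qed.

Lemma Cmod_blaschke2_lt1 (u w : R) (z : C) :
  -1 < u < 1 -> -1 < w < 1 -> Cmod z < 1 -> Cmod (blaschke2 u w z) < 1.
Proof.
  intros Hu Hw Hz. unfold blaschke2.
  apply Cmod_mult_lt1; apply Cmod_mobius_lt1; assumption.
Qed.

Lemma is_arg_real_pos (z : C) (t : R) :
  Im z = 0%R -> 0 < Re z -> is_arg z t -> sin t = 0%R.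
Proof.
  intros Him Hre Ht. unfold is_arg, cis in Ht.
  pose proof (f_equal snd Ht) as Hsnd. pose proof (f_equal fst Ht) as Hfst.
  destruct z as [x y]. simpl in *. subst y.
  assert (Hmod : Cmod (x, 0%R) <> 0%R).
  { intros E. rewrite E in Hfst. lra. }
  assert (Hprod : (Cmod (x, 0%R) * sin t = 0)%R) by lra.
  destruct (Rmult_integral _ _ Hprod); [contradiction | assumption].
Qed.

Lemma is_arg_one_minus_real (z : C) (t : R) :
  Cmod z < 1 -> Im z = 0%R -> is_arg (1 - z) t -> sin t = 0%R.
Proof.
  intros Hz Him. apply is_arg_real_pos.
  - apply Im_Cminus_real; [reflexivity | exact Him].
  - exact (Re_one_minus_pos z Hz).
Qed.

Lemma sin_plus_eq0 (a b : R) : sin a = 0%R -> sin b = 0%R -> sin (a + b) = 0%R.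
Proof. intros Ha Hb. rewrite sin_plus, Ha, Hb. ring. Qed.

Lemma sin_double_eq0 (t : R) : sin t = 0%R -> sin (2 * t) = 0%R.
Proof. intros Ht. rewrite sin_2a, Ht. ring. Qed.

Lemma sin_PI_plus_doubles_eq0 (t1 t2 t3 : R) :
  sin t1 = 0%R -> sin t2 = 0%R -> sin t3 = 0%R ->
  sin (PI + 2 * t1 + 2 * t2 + 2 * t3) = 0%R.
Proof.
  intros S1 S2 S3.
  repeat apply sin_plus_eq0; first [ exact sin_PI | apply sin_double_eq0; assumption ].
Qed.

Theorem lemma3p5 (u w : R) (c : C) (t1 t2 t3 : R) :
  -1 < u < 1 -> -1 < w < 1 ->
  Cmod c < 1 ->
  is_critical_point (blaschke2 u w) c ->
  (forall c' : C, Cmod c' < 1 -> is_critical_point (blaschke2 u w) c' -> c' = c) ->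
  is_arg (1 - Cconj c * RtoC w) t1 ->
  is_arg (1 - Cconj c * RtoC u) t2 ->
  is_arg (1 - c * Cconj (blaschke2 u w c)) t3 ->
  Im (cis (PI + 2 * t1 + 2 * t2 + 2 * t3)
      * ((blaschke2 u w c - c) / (1 - Cconj c * blaschke2 u w c))) = 0.
Proof.
  intros Hu Hw Hc Hcrit Huniq A1 A2 A3.
  pose proof (unique_critical_point_blaschke2_conj u w c Hc Hcrit Huniq) as Hcc.
  pose proof (Im_Cconj_eq c Hcc) as Hcre.
  pose proof (Im_blaschke2_real u w c Hcre) as HBre.
  rewrite Hcc in A1, A2 |- *.
  assert (S1 : sin t1 = 0%R).
  { apply (is_arg_one_minus_real _ _ (Cmod_mult_lt1 _ _ Hc (Cmod_RtoC_lt1 w Hw))); [| exact A1].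
    exact (Im_Cmult_real _ _ Hcre (Im_RtoC w)). }
  assert (S2 : sin t2 = 0%R).
  { apply (is_arg_one_minus_real _ _ (Cmod_mult_lt1 _ _ Hc (Cmod_RtoC_lt1 u Hu))); [| exact A2].
    exact (Im_Cmult_real _ _ Hcre (Im_RtoC u)). }
  assert (S3 : sin t3 = 0%R).
  { refine (is_arg_one_minus_real _ _ _ _ A3).
    - apply (Cmod_mult_lt1 _ _ Hc). rewrite Cmod_conj. exact (Cmod_blaschke2_lt1 u w c Hu Hw Hc).
    - apply (Im_Cmult_real _ _ Hcre). rewrite im_conj, HBre. ring. }
  apply (Im_Cmult_real (cis _)).
  - exact (sin_PI_plus_doubles_eq0 t1 t2 t3 S1 S2 S3).
  - apply Im_Cdiv_real; repeat first
      [ exact Hcre | exact HBre | reflexivity | apply Im_Cminus_real | apply Im_Cmult_real ].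
Qed.
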